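(* Let $q(w)=w^4$, $r_1=1$, $r_2=e^{2i\pi/3}$, $r_3=e^{4i\pi/3}$, and let $R>0$. There exist $0<\lambda<1$, $\epsilon_0>0$, $l_0\ge1$ and, for each $i\in\{1,2,3\}$, a family $(U_i^l)_{l\ge l_0}$ of neighborhoods of $r_i$ whose diameters converge exponentially fast to $0$ as $l\to\infty$, such that for each $l\ge l_0$ and each $\alpha\in\mathbb{C}^*$ the map $g_\alpha(z,w):=(\lambda z+\alpha w,q^l(w))$ satisfies $$\overline{(\alpha\epsilon_0^{-1}\mathbb{D})\times(R\mathbb{D}\setminus R^{-1}\mathbb{D})}\subset g_\alpha\Big((\alpha\epsilon_0^{-1}\mathbb{D})\times\textstyle\bigcup_{i=1}^3U_i^l\Big).$$
   Context: $\mathbb{D}$ is the unit disc; $tE=\{tz:z\in E\}$ for $t\in\mathbb{C}^*$, so $\alpha\epsilon_0^{-1}\mathbb{D}$ is the disc of radius $|\alpha|/\epsilon_0$ centered at $0$. *)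

From Stdlib Require Import Reals.
From Coquelicot Require Import Coquelicot.
Open Scope R_scope.

Definition q (w : C) : C := (w * w * w * w)%C.

Definition qiter (l : nat) (w : C) : C := Nat.iter l q w.

Definition root3 (i : nat) : C :=
  (cos (2 * PI * INR (i - 1) / 3), sin (2 * PI * INR (i - 1) / 3)).

Definition g_map (lam : R) (alpha : C) (l : nat) (p : C * C) : C * C :=
  ((RtoC lam * fst p + alpha * snd p)%C, qiter l (snd p)).

Definition cdisc (rho : R) : C -> Prop := fun z => Cmod z < rho.

Definition closure2 (S : C * C -> Prop) : C * C -> Prop :=
  fun p => forall eps : R, 0 < eps -> exists p', S p' /\
    Cmod (fst p - fst p') < eps /\ Cmod (snd p - snd p') < eps.

From Stdlib Require Import Reals Lra Lia ZArith.
From Coquelicot Require Import Coquelicot.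
Open Scope R_scope.

(* Write p = (p1, p2) and v = p1 / alpha, so that |v| <= 1 / eps0 = 4.  One of the
   cube roots of unity, r_i, makes an angle at most pi/3 with v, hence
   |v - r_i|^2 <= |v|^2 - |v| + 1 <= 13.  In polar coordinates, every p2 in the closed
   annulus has a 4^l-th root w of modulus |p2|^(4^-l) = 1 + O(4^-l) whose argument
   exceeds that of r_i by at most 2 pi / 4^l; so U_i^l can be the closed disc of radius
   O(4^-l) about r_i.  Then z = (p1 - alpha w) / lam has |z| = |alpha| |v - w| / lam,
   which is below 4 |alpha| as soon as lam is close to 1 and 4^-l is small. *)

Definition cis (a : R) : C := (cos a, sin a).

Lemma Cmod_sq z : Cmod z ^ 2 = fst z ^ 2 + snd z ^ 2.
Proof. unfold Cmod. rewrite pow2_sqrt; [reflexivity | nra]. Qed.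

Lemma Cmod_cis a : Cmod (cis a) = 1.
Proof.
  unfold Cmod, cis; simpl fst; simpl snd. rewrite <- sqrt_1. f_equal.
  pose proof (sin2_cos2 a). unfold Rsqr in *. nra.
Qed.

Lemma polar_mult s t a b :
  (RtoC s * cis a * (RtoC t * cis b) = RtoC (s * t) * cis (a + b))%C.
Proof.
  unfold cis, RtoC, Cmult; simpl. rewrite cos_plus, sin_plus.
  apply injective_projections; simpl; ring.
Qed.

Lemma cis_add_2PI_mult a k : cis (a + 2 * IZR k * PI) = cis a.
Proof.
  unfold cis. destruct k as [|m|m].
  - now rewrite Rmult_0_r, Rmult_0_l, Rplus_0_r.
  - now rewrite <- (positive_nat_Z m), <- INR_IZR_INZ, cos_period, sin_period.
  - change (Z.neg m) with (- Z.pos m)%Z.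
    rewrite opp_IZR, <- (positive_nat_Z m), <- INR_IZR_INZ.
    set (n := Pos.to_nat m).
    rewrite <- (cos_period (a + 2 * - INR n * PI) n), <- (sin_period (a + 2 * - INR n * PI) n).
    now replace (a + 2 * - INR n * PI + 2 * INR n * PI) with a by ring.
Qed.

Lemma q_polar s a : q (RtoC s * cis a)%C = (RtoC (s ^ 4) * cis (4 * a))%C.
Proof. unfold q. rewrite !polar_mult. f_equal; f_equal; ring. Qed.

Lemma qiter_polar l s a :
  qiter l (RtoC s * cis a)%C = (RtoC (s ^ (4 ^ l)) * cis (INR (4 ^ l) * a))%C.
Proof.
  induction l as [|l IH].
  - simpl. f_equal; f_equal; ring.
  - unfold qiter in *. simpl Nat.iter. rewrite IH, q_polar, <- pow_mult.
    rewrite Nat.pow_succ_r', mult_INR, Nat.mul_comm, Rmult_assoc.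
    now replace (INR 4) with 4 by (simpl; ring).
Qed.

Lemma Cmod_cis_sub a d : 0 <= d <= 2 * PI -> Cmod (cis (a + d) - cis a) <= d.
Proof.
  intros Hd. set (h := d / 2).
  assert (Hsin : 0 <= sin h <= h).
  { split; [apply sin_ge_0; unfold h; lra |].
    destruct (Req_dec h 0) as [->|]; [rewrite sin_0; lra |].
    left; apply sin_lt_x; unfold h in *; lra. }
  assert (Hcos : cos d = 1 - 2 * sin h * sin h).
  { rewrite <- cos_2a_sin. f_equal. unfold h; field. }
  assert (Hsq : Cmod (cis (a + d) - cis a) ^ 2 = 4 * sin h ^ 2).
  { rewrite Cmod_sq. unfold cis; simpl fst; simpl snd. rewrite cos_plus, sin_plus.
    pose proof (sin2_cos2 a). pose proof (sin2_cos2 d). unfold Rsqr in *.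
    transitivity ((cos a ^ 2 + sin a ^ 2) * (2 - 2 * cos d)); [nra | nra]. }
  pose proof (Cmod_ge_0 (cis (a + d) - cis a)). unfold h in *. nra.
Qed.

Lemma polar_form (p : C) : p <> 0%C -> exists t, p = (RtoC (Cmod p) * cis t)%C.
Proof.
  intros Hp. apply Cmod_gt_0 in Hp. destruct p as [x y]. set (r := Cmod (x, y)) in *.
  assert (Hr : r ^ 2 = x ^ 2 + y ^ 2) by apply Cmod_sq.
  assert (Hc : -1 <= x / r <= 1).
  { split; apply Rmult_le_reg_r with r; try lra; field_simplify; nra. }
  assert (Hs : 1 - (x / r)² = (y / r)²).
  { unfold Rsqr. field_simplify_eq; nra. }
  destruct (Rle_dec 0 y) as [Hy | Hy].
  - exists (acos (x / r)).
    unfold cis, RtoC, Cmult; simpl. rewrite cos_acos, sin_acos, Hs, sqrt_Rsqr by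
      (auto; apply Rdiv_le_0_compat; lra).
    apply injective_projections; simpl; field; lra.
  - exists (- acos (x / r)).
    unfold cis, RtoC, Cmult; simpl. rewrite cos_neg, sin_neg, cos_acos, sin_acos, Hs by auto.
    rewrite Rsqr_neg, sqrt_Rsqr.
    + apply injective_projections; simpl; field; lra.
    + assert (0 < / r) by (apply Rinv_0_lt_compat; lra). unfold Rdiv. nra.
Qed.

Lemma Rabs_exp_sub_1 u : Rabs (exp u - 1) <= Rabs u * exp (Rabs u).
Proof.
  pose proof (exp_ineq1_le u). pose proof (exp_ineq1_le (- u)). pose proof (exp_pos u).
  assert (Hinv : exp u * exp (- u) = 1) by (rewrite <- exp_plus, Rplus_opp_r; apply exp_0).
  destruct (Rle_dec 0 u).
  - rewrite (Rabs_pos_eq u), Rabs_pos_eq by lra. nra.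
  - rewrite (Rabs_left u), Rabs_left1 by nra. nra.
Qed.

Lemma Rabs_exp_div_sub_1 (x L N : R) :
  Rabs x <= L -> 1 <= N -> Rabs (exp (x / N) - 1) <= L / N * exp L.
Proof.
  intros HL HN.
  assert (HL0 : 0 <= L) by (eapply Rle_trans; [apply Rabs_pos | exact HL]).
  assert (Hx : Rabs (x / N) <= L / N).
  { unfold Rdiv. rewrite Rabs_mult, Rabs_inv, (Rabs_pos_eq N) by lra.
    apply Rmult_le_compat_r; [left; apply Rinv_0_lt_compat|]; lra. }
  assert (HLN : L / N <= L).
  { apply Rmult_le_reg_r with N; [lra|]. field_simplify; nra. }
  eapply Rle_trans; [apply Rabs_exp_sub_1|].
  apply Rmult_le_compat; try apply Rabs_pos; try lra.
  - left; apply exp_pos.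
  - destruct (Req_dec (Rabs (x / N)) L) as [-> | ]; [lra |].
    left; apply exp_increasing; lra.
Qed.

Lemma polar_root_near (n : nat) (p : C) (a L : R) :
  (0 < n)%nat -> p <> 0%C -> Rabs (ln (Cmod p)) <= L ->
  exists s phi, (RtoC (s ^ n) * cis (INR n * phi))%C = p /\
    Cmod (RtoC s * cis phi - cis a) <= (L * exp L + 2 * PI) / INR n.
Proof.
  intros Hn Hp HL. set (N := INR n).
  assert (HN : 1 <= N) by (apply (le_INR 1); lia).
  pose proof PI_RGT_0.
  destruct (polar_form p Hp) as [t Ht].
  set (x := (N * a - t) / (2 * PI)).
  destruct (archimed x) as [Hk1 Hk2]. set (k := up x) in *.
  (* [phi] is the first argument of an [n]-th root of [p] that is not below [a]. *)
  set (phi := (t + 2 * IZR k * PI) / N).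
  set (u := ln (Cmod p) / N).
  exists (exp u), phi. split.
  - rewrite <- Rpower_pow by apply exp_pos.
    unfold Rpower. rewrite ln_exp. fold N.
    replace (N * u) with (ln (Cmod p)) by (unfold u; field; lra).
    replace (N * phi) with (t + 2 * IZR k * PI) by (unfold phi; field; lra).
    rewrite exp_ln, cis_add_2PI_mult by (apply Cmod_gt_0; exact Hp). now symmetry.
  - set (d := phi - a).
    assert (Hd : 0 <= d <= 2 * PI / N).
    { replace d with (2 * PI * (IZR k - x) / N) by (unfold d, phi, x; field; lra).
      split; [apply Rdiv_le_0_compat | apply Rmult_le_compat_r]; try nra.
      left; apply Rinv_0_lt_compat; lra. }
    assert (HdN : 2 * PI / N <= 2 * PI).
    { apply Rmult_le_reg_r with N; [lra|]. field_simplify; nra. }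
    pose proof (Rabs_exp_div_sub_1 (ln (Cmod p)) L N HL HN) as Hexp. fold u in Hexp.
    replace (RtoC (exp u) * cis phi - cis a)%C
      with (RtoC (exp u - 1) * cis phi + (cis (a + d) - cis a))%C
      by (unfold d; replace (a + (phi - a)) with phi by ring;
          apply injective_projections; simpl; ring).
    eapply Rle_trans; [apply Cmod_triangle|].
    rewrite Cmod_mult, Cmod_R, Cmod_cis, Rmult_1_r.
    pose proof (Cmod_cis_sub a d ltac:(lra)).
    replace ((L * exp L + 2 * PI) / N) with (L / N * exp L + 2 * PI / N) by (field; lra).
    lra.
Qed.

Lemma qiter_root_near (l : nat) (p : C) (a L : R) :
  p <> 0%C -> Rabs (ln (Cmod p)) <= L ->
  exists w, qiter l w = p /\ Cmod (w - cis a) <= (L * exp L + 2 * PI) * (/ 4) ^ l.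
Proof.
  intros Hp HL.
  assert (Hn : (0 < 4 ^ l)%nat) by (apply Nat.neq_0_lt_0, Nat.pow_nonzero; lia).
  destruct (polar_root_near (4 ^ l) p a L Hn Hp HL) as (s & phi & Hroot & Hnear).
  exists (RtoC s * cis phi)%C. rewrite qiter_polar. split; [exact Hroot|].
  rewrite pow_inv. replace (4 ^ l) with (INR (4 ^ l)) by (rewrite pow_INR; f_equal; simpl; ring).
  exact Hnear.
Qed.

Lemma root3_aligned (v : C) : exists i, (1 <= i <= 3)%nat /\
  Cmod v <= 2 * (fst v * fst (root3 i) + snd v * snd (root3 i)).
Proof.
  destruct v as [a b]. set (m := Cmod (a, b)).
  assert (Hm : m ^ 2 = a ^ 2 + b ^ 2) by apply Cmod_sq.
  assert (Hm0 : 0 <= m) by apply Cmod_ge_0.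
  pose proof (sqrt_lt_R0 3 ltac:(lra)) as Hs0.
  pose proof (sqrt_sqrt 3 ltac:(lra)) as Hs.
  assert (E1 : root3 1 = (1, 0)).
  { unfold root3. simpl INR. replace (2 * PI * 0 / 3) with 0 by field.
    now rewrite cos_0, sin_0. }
  assert (E2 : root3 2 = (- (1 / 2), sqrt 3 / 2)).
  { unfold root3. simpl INR. replace (2 * PI * 1 / 3) with (PI - PI / 3) by field.
    now rewrite Rtrigo_facts.cos_pi_minus, sin_PI_x, cos_PI3, sin_PI3. }
  assert (E3 : root3 3 = (- (1 / 2), - (sqrt 3 / 2))).
  { unfold root3. simpl INR. replace (2 * PI * (1 + 1) / 3) with (PI / 3 + PI) by field.
    now rewrite neg_cos, neg_sin, cos_PI3, sin_PI3. }
  destruct (Rle_dec (m / 2) a) as [Ha | Ha].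
  { exists 1%nat. split; [lia|]. rewrite E1. simpl. lra. }
  assert (Hb : m + a <= sqrt 3 * Rabs b).
  { apply Rnot_lt_le. intro Hlt.
    assert (0 <= sqrt 3 * Rabs b) by (pose proof (Rabs_pos b); nra).
    assert (Rabs b ^ 2 = b ^ 2) by apply pow2_abs.
    nra. }
  destruct (Rle_dec 0 b) as [Hb0 | Hb0].
  - rewrite Rabs_pos_eq in Hb by lra. exists 2%nat. split; [lia|]. rewrite E2. simpl. lra.
  - rewrite Rabs_left in Hb by lra. exists 3%nat. split; [lia|]. rewrite E3. simpl. lra.
Qed.

Lemma root3_closer (v : C) : exists i, (1 <= i <= 3)%nat /\
  Cmod (v - root3 i) ^ 2 <= Cmod v ^ 2 - Cmod v + 1.
Proof.
  destruct (root3_aligned v) as [i [Hi Hal]]. exists i. split; [exact Hi|].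
  assert (Hr : Cmod (root3 i) ^ 2 = 1).
  { change (root3 i) with (cis (2 * PI * INR (i - 1) / 3)). rewrite Cmod_cis. ring. }
  pose proof (Cmod_sq v) as Hv. rewrite Cmod_sq in Hr |- *.
  destruct v as [a b]. destruct (root3 i) as [c s]. simpl in *. nra.
Qed.

Lemma Cmod_sub_triangle x y c : Cmod (x - y) <= Cmod (x - c) + Cmod (y - c).
Proof.
  replace (x - y)%C with ((x - c) + - (y - c))%C by (apply injective_projections; simpl; ring).
  rewrite <- (Cmod_opp (y - c)). apply Cmod_triangle.
Qed.

Lemma Rabs_Cmod_sub x y : Rabs (Cmod x - Cmod y) <= Cmod (x - y).
Proof.
  pose proof (Cmod_triangle (x - y) y). pose proof (Cmod_triangle (y - x) x).
  replace (x - y + y)%C with x in * by (apply injective_projections; simpl; ring).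
  replace (y - x + x)%C with y in * by (apply injective_projections; simpl; ring).
  replace (y - x)%C with (- (x - y))%C in * by (apply injective_projections; simpl; ring).
  rewrite Cmod_opp in *. apply Rabs_le. lra.
Qed.

Lemma locally_Cmod_le (c : C) (r : R) : 0 < r -> locally c (fun w => Cmod (w - c) <= r).
Proof.
  intros Hr. assert (Hr2 : 0 < r / 2) by lra.
  exists (mkposreal _ Hr2). intros w Hw.
  apply C_NormedModule_mixin_compat2 in Hw. simpl in Hw.
  change (minus w c) with (w - c)%C in Hw.
  pose proof (sqrt_less_alt 2 ltac:(lra)). nra.
Qed.

Lemma Rabs_ln_annulus (Rr rho : R) :
  0 < Rr -> / Rr <= rho <= Rr -> Rabs (ln rho) <= Rabs (ln Rr).
Proof.
  intros HR Hrho. pose proof (Rinv_0_lt_compat Rr HR).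
  assert (ln rho <= ln Rr) by (apply ln_le; lra).
  assert (ln (/ Rr) <= ln rho) by (apply ln_le; lra).
  rewrite ln_Rinv in * by lra.
  apply Rabs_le. pose proof (Rle_abs (ln Rr)). pose proof (Rle_abs (- ln Rr)).
  rewrite Rabs_Ropp in *. lra.
Qed.

Lemma closure2_disc_annulus M Rr p :
  closure2 (fun p' => cdisc M (fst p') /\ cdisc Rr (snd p') /\ ~ cdisc (/ Rr) (snd p')) p ->
  Cmod (fst p) <= M /\ / Rr <= Cmod (snd p) <= Rr.
Proof.
  unfold closure2, cdisc. intros Hc.
  assert (Happrox : forall eps, 0 < eps -> exists p',
    Cmod (fst p') < M /\ Cmod (snd p') < Rr /\ / Rr <= Cmod (snd p') /\
    Rabs (Cmod (fst p) - Cmod (fst p')) < eps /\ Rabs (Cmod (snd p) - Cmod (snd p')) < eps).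
  { intros eps Heps. destruct (Hc eps Heps) as (p' & [H1 [H2 H3]] & H4 & H5).
    exists p'. repeat split; try lra.
    - eapply Rle_lt_trans; [apply Rabs_Cmod_sub | exact H4].
    - eapply Rle_lt_trans; [apply Rabs_Cmod_sub | exact H5]. }
  repeat split; apply Rnot_lt_le; intro Hout.
  - destruct (Happrox (Cmod (fst p) - M)) as (p' & H1 & _ & _ & H2 & _); [lra|].
    apply Rabs_def2 in H2. lra.
  - destruct (Happrox (/ Rr - Cmod (snd p))) as (p' & _ & _ & H1 & _ & H2); [lra|].
    apply Rabs_def2 in H2. lra.
  - destruct (Happrox (Cmod (snd p) - Rr)) as (p' & _ & H1 & _ & _ & H2); [lra|].
    apply Rabs_def2 in H2. lra.
Qed.

Lemma g_map_covers (l : nat) (alpha p1 p2 : C) (L : R) :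
  alpha <> 0%C -> Cmod p1 <= 4 * Cmod alpha ->
  p2 <> 0%C -> Rabs (ln (Cmod p2)) <= L ->
  (L * exp L + 2 * PI) * (/ 4) ^ l <= / 4 ->
  exists z w i, Cmod z < 4 * Cmod alpha /\ (1 <= i <= 3)%nat /\
    Cmod (w - root3 i) <= (L * exp L + 2 * PI) * (/ 4) ^ l /\
    g_map (99 / 100) alpha l (z, w) = (p1, p2).
Proof.
  intros Ha Hp1 Hp2 HL Hsmall.
  assert (Ha0 : 0 < Cmod alpha) by (apply Cmod_gt_0; exact Ha).
  assert (Hlam : RtoC (99 / 100) <> 0%C) by (intro E; apply (f_equal fst) in E; simpl in E; lra).
  set (v := (p1 / alpha)%C).
  destruct (root3_closer v) as [i [Hi Hvr]].
  destruct (qiter_root_near l p2 (2 * PI * INR (i - 1) / 3) L Hp2 HL) as [w [Hw Hwr]].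
  change (cis (2 * PI * INR (i - 1) / 3)) with (root3 i) in Hwr.
  exists (alpha * (v - w) / RtoC (99 / 100))%C, w, i. split; [|split; [|split]].
  - assert (Hv : Cmod v <= 4).
    { unfold v. rewrite Cmod_div by exact Ha.
      apply Rmult_le_reg_r with (Cmod alpha); [lra|]. field_simplify; lra. }
    pose proof (Cmod_ge_0 v). pose proof (Cmod_ge_0 (v - root3 i)).
    (* sqrt 13 < 37/10 and 37/10 + 1/4 < 4 * 99/100 *)
    assert (Hvr' : Cmod (v - root3 i) < 37 / 10) by nra.
    assert (Hvw : Cmod (v - w) < 396 / 100).
    { pose proof (Cmod_sub_triangle v w (root3 i)). lra. }
    rewrite Cmod_div, Cmod_mult, Cmod_R, Rabs_pos_eq by (auto; lra).
    pose proof (Cmod_ge_0 (v - w)).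
    apply Rmult_lt_reg_r with (99 / 100); [lra|]. field_simplify; nra.
  - exact Hi.
  - exact Hwr.
  - unfold g_map; simpl. rewrite Hw. f_equal. unfold v. field. split; assumption.
Qed.

Theorem lemma6p1 (Rr : R) (HR : 0 < Rr) :
  exists (lam eps0 : R) (l0 : nat) (U : nat -> nat -> C -> Prop),
    0 < lam < 1 /\ 0 < eps0 /\ (1 <= l0)%nat /\
    (* each U i l is a neighborhood of r_i *)
    (forall i l, (1 <= i <= 3)%nat -> (l0 <= l)%nat -> locally (root3 i) (U i l)) /\
    (* diameters converge exponentially fast to 0 *)
    (exists (K theta : R), 0 < K /\ 0 < theta < 1 /\
       forall i l, (1 <= i <= 3)%nat -> (l0 <= l)%nat ->
         forall x y, U i l x -> U i l y -> Cmod (x - y) <= K * theta ^ l) /\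
    (* covering property *)
    (forall (l : nat) (alpha : C), (l0 <= l)%nat -> alpha <> 0%C ->
       forall p : C * C,
         closure2 (fun p' => cdisc (Cmod alpha / eps0) (fst p') /\
                             cdisc Rr (snd p') /\ ~ cdisc (/ Rr) (snd p')) p ->
         exists z w, cdisc (Cmod alpha / eps0) z /\
                     (exists i, (1 <= i <= 3)%nat /\ U i l w) /\
                     g_map lam alpha l (z, w) = p).
Proof.
  set (L := Rabs (ln Rr)). set (D := L * exp L + 2 * PI).
  assert (HD : 0 < D).
  { assert (0 <= L) by apply Rabs_pos. pose proof (exp_pos L). pose proof PI_RGT_0. unfold D. nra. }
  destruct (pow_lt_1_zero (/ 4) ltac:(rewrite Rabs_pos_eq; lra) (/ (4 * D)))
    as [l1 Hl1]; [apply Rinv_0_lt_compat; lra|].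
  assert (Hsmall : forall l, (l1 <= l)%nat -> D * (/ 4) ^ l <= / 4).
  { intros l Hl. specialize (Hl1 l Hl). rewrite Rabs_pos_eq in Hl1 by (apply pow_le; lra).
    apply Rmult_lt_compat_l with (r := D) in Hl1; [|lra].
    replace (D * / (4 * D)) with (/ 4) in Hl1 by (field; lra). lra. }
  exists (99 / 100), (1 / 4), (max 1 l1), (fun i l w => Cmod (w - root3 i) <= D * (/ 4) ^ l).
  split; [lra|]. split; [lra|]. split; [lia|]. split; [|split].
  - intros i l _ _. apply locally_Cmod_le. apply Rmult_lt_0_compat; [lra | apply pow_lt; lra].
  - exists (2 * D), (/ 4). split; [lra|]. split; [lra|].
    intros i l _ _ x y Hx Hy; cbv beta in Hx, Hy.
    pose proof (Cmod_sub_triangle x y (root3 i)). lra.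
  - intros l alpha Hl Ha p Hp.
    destruct (closure2_disc_annulus _ _ _ Hp) as [Hp1 Hp2].
    assert (Hp2' : snd p <> 0%C).
    { intro E. rewrite E, Cmod_0 in Hp2. pose proof (Rinv_0_lt_compat Rr HR). lra. }
    replace (Cmod alpha / (1 / 4)) with (4 * Cmod alpha) in * by (field; lra).
    destruct (g_map_covers l alpha (fst p) (snd p) L Ha Hp1 Hp2'
                (Rabs_ln_annulus Rr _ HR Hp2) (Hsmall l ltac:(lia)))
      as (z & w & i & Hz & Hi & Hw & Hg).
    exists z, w. split; [exact Hz|]. split; [exists i; auto|].
    rewrite Hg. now destruct p.
Qed.
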